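(* Let $G$ be the discrete Heisenberg group of upper unitriangular $3\times3$ integer matrices $\begin{pmatrix}1&a&b\\0&1&c\\0&0&1\end{pmatrix}$, $a,b,c\in\mathbb Z$, and let $A$ be its center $\{a=c=0\}$, identified with $\mathbb Z$ via the entry $b$. Let $d(b_1,b_2)=|b_1-b_2|$ on $A$. Then there is no left invariant metric $\underline d$ on $G$ with $\underline d|_A=d$ (in particular no two-sided invariant one). *)

From Stdlib Require Import Reals ZArith.
Open Scope R_scope.

(* The element  [[1,a,b],[0,1,c],[0,0,1]]  of the discrete Heisenberg group,
   recorded by its three free entries a, b, c. *)
Record heis := Heis { h_a : Z; h_b : Z; h_c : Z }.

(* Matrix product of two upper unitriangular 3x3 integer matrices:
   [[1,a,b],[0,1,c],[0,0,1]] * [[1,a',b'],[0,1,c'],[0,0,1]]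
   = [[1,a+a',b'+a*c'+b],[0,1,c+c'],[0,0,1]]. *)
Definition heis_mul (x y : heis) : heis :=
  Heis (h_a x + h_a y)%Z (h_b y + h_a x * h_c y + h_b x)%Z (h_c x + h_c y)%Z.

Definition center_elt (b : Z) : heis := Heis 0%Z b 0%Z.

Definition is_metric {T : Type} (d : T -> T -> R) : Prop :=
  (forall x y, 0 <= d x y) /\
  (forall x y, d x y = 0 <-> x = y) /\
  (forall x y, d x y = d y x) /\
  (forall x y z, d x z <= d x y + d y z).

Definition left_invariant (d : heis -> heis -> R) : Prop :=
  forall g x y, d (heis_mul g x) (heis_mul g y) = d x y.

(* A left-invariant metric d is determined by the length function
   N g := d(1, g), which is subadditive and invariant under inversion.
   Writing x = (1,0,0) and y = (0,0,1), the commutator of the powers x^n and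
   y^n is the central element with b-entry n^2, so by subadditivity its
   length is at most 2n(N x + N y): the center is at most linearly long in n.
   But if d agrees with |b1 - b2| on the center, that length is exactly n^2,
   and no quadratic function is bounded by a linear one. *)

From Stdlib Require Import Reals ZArith Lia Lra.
Open Scope R_scope.

Definition heis_one : heis := Heis 0 0 0.

Definition heis_inv (g : heis) : heis :=
  Heis (- h_a g) (h_a g * h_c g - h_b g) (- h_c g).

Lemma heis_mul_one_r (g : heis) : heis_mul g heis_one = g.
Proof. destruct g; unfold heis_mul, heis_one; simpl; f_equal; ring. Qed.

Lemma heis_mul_inv_r (g : heis) : heis_mul g (heis_inv g) = heis_one.
Proof. destruct g; unfold heis_mul, heis_inv, heis_one; simpl; f_equal; ring. Qed.

Fixpoint heis_pow (g : heis) (n : nat) : heis :=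
  match n with
  | O => heis_one
  | S m => heis_mul (heis_pow g m) g
  end.

Lemma heis_pow_x (n : nat) : heis_pow (Heis 1 0 0) n = Heis (Z.of_nat n) 0 0.
Proof.
  induction n as [|n IH]; [reflexivity|].
  simpl heis_pow; rewrite IH; unfold heis_mul; simpl; f_equal; lia.
Qed.

Lemma heis_pow_y (n : nat) : heis_pow (Heis 0 0 1) n = Heis 0 0 (Z.of_nat n).
Proof.
  induction n as [|n IH]; [reflexivity|].
  simpl heis_pow; rewrite IH; unfold heis_mul; simpl; f_equal; lia.
Qed.

Definition heis_comm (g h : heis) : heis :=
  heis_mul (heis_mul (heis_mul g h) (heis_inv g)) (heis_inv h).

(* The commutator of (a,0,0) and (0,0,c) is the central element a*c:
   this is where the quadratic growth of the center comes from. *)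
Lemma heis_comm_xy (a c : Z) :
  heis_comm (Heis a 0 0) (Heis 0 0 c) = center_elt (a * c).
Proof.
  unfold heis_comm, heis_mul, heis_inv, center_elt; simpl; f_equal; ring.
Qed.

Section LengthFunction.

Variable d : heis -> heis -> R.
Hypothesis d_metric : is_metric d.
Hypothesis d_left_inv : left_invariant d.

Definition len (g : heis) : R := d heis_one g.

Lemma len_one : len heis_one = 0.
Proof. destruct d_metric as [_ [Hzero _]]; apply Hzero; reflexivity. Qed.

(* Left invariance turns d(g, gh) into len h, hence the triangle inequality
   through g gives subadditivity. *)
Lemma len_mul (g h : heis) : len (heis_mul g h) <= len g + len h.
Proof.
  destruct d_metric as [_ [_ [_ Htri]]]; unfold len.
  rewrite <- (d_left_inv g heis_one h), heis_mul_one_r.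
  apply Htri.
Qed.

(* Length is inversion invariant: d(1, g^-1) = d(g, 1) after translating by g. *)
Lemma len_inv (g : heis) : len (heis_inv g) = len g.
Proof.
  destruct d_metric as [_ [_ [Hsym _]]]; unfold len.
  rewrite <- (d_left_inv g heis_one (heis_inv g)), heis_mul_one_r, heis_mul_inv_r.
  apply Hsym.
Qed.

Lemma len_pow (g : heis) (n : nat) : len (heis_pow g n) <= INR n * len g.
Proof.
  induction n as [|n IH]; simpl heis_pow.
  - rewrite len_one; simpl; lra.
  - rewrite S_INR; pose proof (len_mul (heis_pow g n) g); lra.
Qed.

(* A commutator is a product of four factors of lengths len g and len h. *)
Lemma len_comm (g h : heis) : len (heis_comm g h) <= 2 * (len g + len h).
Proof.
  unfold heis_comm.
  pose proof (len_mul (heis_mul (heis_mul g h) (heis_inv g)) (heis_inv h)).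
  pose proof (len_mul (heis_mul g h) (heis_inv g)).
  pose proof (len_mul g h).
  rewrite len_inv in *; lra.
Qed.

Lemma len_center_square_le (n : nat) :
  len (center_elt (Z.of_nat n * Z.of_nat n)) <=
  INR n * (2 * (len (Heis 1 0 0) + len (Heis 0 0 1))).
Proof.
  rewrite <- heis_comm_xy, <- heis_pow_x, <- heis_pow_y.
  pose proof (len_comm (heis_pow (Heis 1 0 0) n) (heis_pow (Heis 0 0 1) n)).
  pose proof (len_pow (Heis 1 0 0) n).
  pose proof (len_pow (Heis 0 0 1) n).
  lra.
Qed.

End LengthFunction.

Lemma square_not_linearly_bounded (C : R) :
  ~ (forall n : nat, INR n * INR n <= INR n * C).
Proof.
  intros Hbound.
  destruct (INR_unbounded (Rabs C)) as [n Hn].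
  pose proof (Rle_abs C); pose proof (Rabs_pos C).
  pose proof (Hbound n).
  assert (INR n * C < INR n * INR n) by (apply Rmult_lt_compat_l; lra).
  lra.
Qed.

Theorem mainTheorem9 :
  ~ (exists d : heis -> heis -> R,
       is_metric d /\ left_invariant d /\
       (forall b1 b2 : Z, d (center_elt b1) (center_elt b2) = Rabs (IZR (b1 - b2)))).
Proof.
  intros [d [Hmetric [Hinv Hcenter]]].
  apply (square_not_linearly_bounded
           (2 * (len d (Heis 1 0 0) + len d (Heis 0 0 1)))).
  intros n.
  assert (Hlen : len d (center_elt (Z.of_nat n * Z.of_nat n)) = INR n * INR n).
  { unfold len; change heis_one with (center_elt 0); rewrite Hcenter.
    rewrite Z.sub_0_l, opp_IZR, Rabs_Ropp, mult_IZR, <- INR_IZR_INZ.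
    apply Rabs_right, Rle_ge, Rmult_le_pos; apply pos_INR. }
  rewrite <- Hlen.
  apply len_center_square_le; assumption.
Qed.
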